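(* Let $\nu$ and $\nu'$ be $k$-atomic distributions supported on $[-1,1]$. If $|m_i(\nu)-m_i(\nu')|\le\delta$ for $i=1,\dots,2k-1$, then \[W_1(\nu,\nu')\le O\big(k\delta^{\frac{1}{2k-1}}\big).\]
   Context: A $k$-atomic distribution is a discrete distribution supported on (at most) $k$ points. $m_i(\pi)=\mathbb{E}_\pi X^i$. $W_1$ is the 1-Wasserstein distance: $W_1(\nu,\nu')=\inf\mathbb{E}|X-Y|$ over couplings of $\nu,\nu'$. $O(\cdot)$ hides an absolute constant. *)

From HB Require Import structures.
From mathcomp Require Import all_boot all_order all_algebra.
From mathcomp Require Import all_classical all_reals all_analysis.
From mathcomp Require Import Rstruct Rstruct_topology.
From Stdlib Require Import Rdefinitions.
Set Implicit Arguments. Unset Strict Implicit. Unset Printing Implicit Defensive.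
Import Order.TTheory GRing.Theory Num.Theory.
Local Open Scope ring_scope.
Local Open Scope classical_set_scope.

(* A k-atomic distribution is given by weights w and atoms x indexed by 'I_k
   (zero weights / repeated atoms allowed, so "at most k" points). *)
Definition katomic_on11 (k : nat) (w x : 'I_k -> R) : Prop :=
  (forall i, 0 <= w i) /\ \sum_(i < k) w i = 1 /\ (forall i, -1 <= x i <= 1).

Definition moment (k : nat) (w x : 'I_k -> R) (n : nat) : R :=
  \sum_(j < k) w j * x j ^+ n.

(* couplings of sum_i w i delta_{x i} and sum_j w' j delta_{x' j}: any coupling
   is supported on supp x supp', hence given by a nonnegative matrix with the
   prescribed marginals. *)
Definition coupling (k : nat) (w w' : 'I_k -> R) (g : 'I_k -> 'I_k -> R) : Prop :=
  (forall i j, 0 <= g i j) /\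
  (forall i, \sum_(j < k) g i j = w i) /\
  (forall j, \sum_(i < k) g i j = w' j).

Definition coupling_cost (k : nat) (x x' : 'I_k -> R) (g : 'I_k -> 'I_k -> R) : R :=
  \sum_(i < k) \sum_(j < k) g i j * `|x i - x' j|.

Definition W1 (k : nat) (w x w' x' : 'I_k -> R) : R :=
  inf [set c | exists g, coupling w w' g /\ c = coupling_cost x x' g].

(* Merge the two distributions into the signed measure r = nu - nu' on their 2k atoms in
   [-1, 1]; its moments of order < 2k are at most delta (the one of order 0 vanishes).
   The quantile coupling carries the mass |r(-oo, a]| across each gap (a, b) between
   consecutive atoms, so W1 is at most the sum of (b - a) |r(-oo, a]| over the gaps.
   For a gap of length G, multiplying r by the polynomial vanishing at the atoms left of
   the gap and expanding the remaining product of reciprocals by divided differences over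
   the atoms right of it (all poles are at distance >= G) gives
   |r(a, oo)| G^(2k-1) <= 6^(2k) delta. As r(-oo, a] = - r(a, oo) has modulus at most 1,
   this yields G |r(-oo, a]| <= 36 delta^(1/(2k-1)), and the 2k gaps give the bound
   72 k delta^(1/(2k-1)). *)

From HB Require Import structures.
From mathcomp Require Import all_boot all_order all_algebra.
From mathcomp Require Import all_classical all_reals all_analysis.
From mathcomp Require Import Rstruct Rstruct_topology.
From Stdlib Require Import Rdefinitions.
From mathcomp Require Import ring lra zify.
Set Implicit Arguments. Unset Strict Implicit. Unset Printing Implicit Defensive.
Import Order.TTheory GRing.Theory Num.Theory.
Local Open Scope ring_scope.

(** * Moments of signed atomic measures *)

Section SignedMoments.
Variables (R : realFieldType) (I : finType) (z : I -> R).

Definition moments_le (r : I -> R) (n : nat) (D : R) : Prop :=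
  forall j, (j < n)%nat -> `|\sum_i r i * z i ^+ j| <= D.

Lemma moments_le_mul_sub r n D v : `|v| <= 1 ->
  moments_le r n.+1 D -> moments_le (fun i => r i * (z i - v)) n (2 * D).
Proof.
move=> v1 hr j jn.
have -> : \sum_i r i * (z i - v) * z i ^+ j =
    \sum_i r i * z i ^+ j.+1 - v * \sum_i r i * z i ^+ j.
  by rewrite mulr_sumr -sumrB; apply: eq_bigr => i _; rewrite exprS; ring.
have := hr j.+1 jn; have : `|v * \sum_i r i * z i ^+ j| <= D.
  by rewrite normrM -[D]mul1r; apply: ler_pM => //; apply: hr; apply: ltnW.
by move=> ? ?; apply: le_trans (ler_normB _ _) _; lra.
Qed.

Lemma moments_le_mul_prod r n D (U : seq R) : {in U, forall u, `|u| <= 1} ->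
  moments_le r (size U + n) D ->
  moments_le (fun i => r i * \prod_(u <- U) (z i - u)) n (2 ^+ size U * D).
Proof.
elim: U n D => [|u U IH] n D U1 hr j jn.
  by under eq_bigr do rewrite big_nil mulr1; rewrite mul1r; apply: hr.
have U1' : {in U, forall v, `|v| <= 1} by move=> v vU; apply: U1; rewrite inE vU orbT.
rewrite /= exprS -mulrA.
have := moments_le_mul_sub (U1 u (mem_head u U)) (IH n.+1 D U1' _) jn.
rewrite addnS => /(_ hr).
by under eq_bigr do rewrite big_cons [(_ - u) * _]mulrC mulrA.
Qed.

(* The divided-difference step [1 / (y - u) = (1 - (y - v) / (y - u)) / (v - u)]. *)
Lemma sum_inv_prod_cons r u v (U : seq R) : u != v -> (forall i, r i != 0 -> z i != u) ->
  \sum_i r i * \prod_(w <- u :: U) (z i - w)^-1 =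
  (v - u)^-1 * (\sum_i r i * \prod_(w <- U) (z i - w)^-1 -
                \sum_i r i * (z i - v) * \prod_(w <- u :: U) (z i - w)^-1).
Proof.
move=> uv supp; rewrite -sumrB mulr_sumr; apply: eq_bigr => i _; rewrite !big_cons.
have [->|/supp ziu] := eqVneq (r i) 0; first by rewrite !mul0r subrr mulr0.
by field; rewrite !subr_eq0 ziu eq_sym uv.
Qed.

(* Each atom [v] of the support is removed by the factor [y - v] of [sum_inv_prod_cons],
   at the price of a factor 2 on the moment bound and of the division by [v - u >= G]. *)
Lemma norm_sum_inv_prod_le (G D : R) (V U : seq R) (r : I -> R) :
  0 < G <= 2 -> 0 <= D -> {in V, forall v, `|v| <= 1} ->
  (forall i, r i != 0 -> z i \in V) -> moments_le r (size V) D ->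
  {in U & V, forall u v, G <= v - u} ->
  `|\sum_i r i * \prod_(u <- U) (z i - u)^-1| * G ^+ (size U + size V).-1
    <= 3 ^+ (size U + size V) * D.
Proof.
move=> /andP[G0 G2]; elim: V r D U => [|v V IHV] r D U D0 V1 supp hr.
  have r0 i : r i = 0 by apply/eqP/negPn/negP => /supp.
  move=> _; rewrite big1 => [|i _]; last by rewrite r0 mul0r.
  by rewrite normr0 mul0r mulr_ge0 ?exprn_ge0.
have V1' : {in V, forall w, `|w| <= 1} by move=> w wV; apply: V1; rewrite inE wV orbT.
elim: U => [|u U IHU] UV.
  under eq_bigr do rewrite big_nil mulr1.
  have mass : `|\sum_i r i| <= D.
    by have := hr 0%nat isT; under eq_bigr do rewrite expr0 mulr1.
  rewrite add0n [leRHS]mulrC; apply: ler_pM => //=; first by rewrite exprn_ge0 ?ltW.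
  apply: (le_trans (y := 3 ^+ size V)); first by apply: lerXn2r; rewrite ?nnegrE; lra.
  by rewrite exprS ler_peMl ?exprn_ge0 // ler1n.
pose r' i := r i * (z i - v).
have supp' i : r' i != 0 -> z i \in V.
  rewrite mulf_eq0 negb_or subr_eq0 => /andP[/supp]; rewrite inE.
  by case/orP => [/eqP->|//]; rewrite eqxx.
have hr' : moments_le r' (size V) (2 * D) by apply: moments_le_mul_sub; rewrite ?V1 ?mem_head.
have vu : G <= v - u by apply: UV; rewrite mem_head.
have IH1 := IHU (fun u' w u'U => UV u' w (mem_behead (s := u :: U) u'U)).
have IH2 := IHV r' (2 * D) (u :: U) (mulr_ge0 (ler0n _ 2) D0) V1' supp' hr'
  (fun u' w u'U wV => UV u' w u'U (mem_behead (s := v :: V) wV)).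
have uv : u != v by apply/eqP => uv; move: vu; rewrite uv subrr; lra.
have supp_u i : r i != 0 -> z i != u.
  by move/supp => ziV; apply/eqP => ziu; have := UV u (z i) (mem_head _ _) ziV; rewrite ziu; lra.
rewrite (sum_inv_prod_cons U uv supp_u).
move: IH1 IH2; rewrite /= !addSn !addnS /= normrM.
set S1 := `|\sum_i _|; set S2 := `|\sum_i _|; set S := \sum_i _ - _.
set m := (size U + size V)%nat; rewrite [G ^+ m.+1]exprS [3 ^+ m.+2]exprS => IH1 IH2.
have inv_vu : `|(v - u)^-1| * G <= 1 by rewrite ger0_norm ?invr_ge0 ?ler_pdivrMl; lra.
have hS : `|S| * G ^+ m <= 3 * (3 ^+ m.+1 * D).
  apply: le_trans (_ : (S1 + S2) * G ^+ m <= _).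
    by rewrite ler_wpM2r ?exprn_ge0 ?ler_normB ?ltW.
  by rewrite mulrDl; lra.
have -> : `|(v - u)^-1| * `|S| * (G * G ^+ m) = (`|(v - u)^-1| * G) * (`|S| * G ^+ m).
  by ring.
apply: (le_trans (y := 1 * (3 * (3 ^+ m.+1 * D)))); last by rewrite mul1r mulrA.
by apply: ler_pM => //; rewrite mulr_ge0 ?exprn_ge0 // ltW.
Qed.

(* Multiplying [r] by [prod_(u <- U) (y - u)] over the atoms [U] left of the gap kills them, and
   the mass right of the gap becomes the sum bounded by [norm_sum_inv_prod_le]. *)
Lemma gap_mass_le (r : I -> R) (delta A G : R) :
  0 < G <= 2 -> 0 <= delta -> (forall i, `|z i| <= 1) ->
  (forall i, z i <= A \/ A + G <= z i) -> moments_le r #|I| delta ->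
  `|\sum_(i | A < z i) r i| * G ^+ #|I|.-1 <= 6 ^+ #|I| * delta.
Proof.
move=> hG d0 z1 sep hr.
set U := [seq z i | i <- enum I & z i <= A].
set V := [seq z i | i <- enum I & A < z i].
have UV_card : (size U + size V)%nat = #|I|.
  rewrite !size_map !size_filter cardT -(count_predC (fun i => z i <= A)).
  by congr (_ + _)%nat; apply: eq_count => i /=; rewrite ltNge.
have zU i : z i <= A -> z i \in U.
  by move=> ziA; apply: map_f; rewrite mem_filter ziA mem_enum.
have zV i : A < z i -> z i \in V.
  by move=> Azi; apply: map_f; rewrite mem_filter Azi mem_enum.
have Ule u : u \in U -> u <= A by case/mapP => i; rewrite mem_filter => /andP[? _] ->.
have Vge v : v \in V -> A + G <= v.
  case/mapP => i; rewrite mem_filter => /andP[Azi _] ->.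
  by case: (sep i) => // ziA; move: Azi; rewrite ltNge ziA.
pose rU i := r i * \prod_(u <- U) (z i - u).
have rU0 i : z i <= A -> rU i = 0.
  by move/zU => ziU; rewrite /rU (big_rem (z i)) //= subrr mul0r mulr0.
have -> : \sum_(i | A < z i) r i = \sum_i rU i * \prod_(u <- U) (z i - u)^-1.
  rewrite big_mkcond; apply: eq_bigr => i _; case: ltrP => [Azi|/rU0->]; last by rewrite mul0r.
  rewrite -mulrA -big_split big_seq big1 ?mulr1 // => u /Ule uA.
  by rewrite /= mulfV // subr_eq0; apply/eqP; lra.
have hrU : moments_le rU (size V) (2 ^+ size U * delta).
  by apply: moments_le_mul_prod; rewrite ?UV_card // => u /mapP[i _ ->].
have suppV i : rU i != 0 -> z i \in V.
  by case: (ltrP A (z i)) => [/zV //|/rU0->]; rewrite eqxx.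
have V1 : {in V, forall v, `|v| <= 1} by move=> v /mapP[i _ ->].
have UV : {in U & V, forall u v, G <= v - u} by move=> u v /Ule uA /Vge vAG; lra.
have := norm_sum_inv_prod_le hG (mulr_ge0 (exprn_ge0 _ (ler0n _ 2)) d0) V1 suppV hrU UV.
rewrite UV_card => /le_trans; apply.
apply: (le_trans (y := 3 ^+ #|I| * (2 ^+ #|I| * delta))); last by rewrite mulrA -exprMn -natrM.
rewrite ler_wpM2l ?exprn_ge0 // ler_wpM2r //.
by apply: ler_weXn2l; rewrite ?ler1n // -UV_card leq_addr.
Qed.
End SignedMoments.

Lemma gap_mass_root_le (R : realFieldType) (m : nat) (G X t : R) : (1 < m)%nat ->
  0 <= G -> 0 <= X <= 1 -> 0 <= t ->
  X * G ^+ m.-1 <= 6 ^+ m * t ^+ m.-1 -> G * X <= 36 * t.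
Proof.
move=> m1 G0 /andP[X0 X1] t0 hXG.
have m0 : (0 < m.-1)%nat by rewrite -ltnS prednK ?(ltnW m1).
rewrite -(ler_pXn2r m0) ?nnegrE ?mulr_ge0 // !exprMn.
apply: le_trans (_ : X * G ^+ m.-1 <= _).
  by rewrite mulrC ler_wpM2r ?exprn_ge0 // -[leRHS]expr1 ler_wiXn2l.
apply: le_trans hXG _; rewrite ler_wpM2r ?exprn_ge0 //.
have -> : 36 = 6 ^+ 2 :> R by rewrite -natrX.
by rewrite -exprM; apply: ler_weXn2l; rewrite ?ler1n //; lia.
Qed.

Lemma cdf_gap_le (R : realFieldType) (K : finType) (z p q : K -> R) (delta t : R) :
  (1 < #|K|)%nat -> (forall c, `|z c| <= 1) ->
  (forall c, 0 <= p c) -> (forall c, 0 <= q c) -> \sum_c p c = 1 -> \sum_c q c = 1 ->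
  0 <= t -> t ^+ #|K|.-1 = delta -> moments_le z (fun c => p c - q c) #|K| delta ->
  forall c d, z c < z d -> (forall e, z e <= z c \/ z d <= z e) ->
  (z d - z c) * `|\sum_(e | z e <= z c) (p e - q e)| <= 36 * t.
Proof.
move=> K1 z1 p0 q0 p1 q1 t0 tK hmom c d cd sep.
have mass01 (f : K -> R) : (forall e, 0 <= f e) -> \sum_e f e = 1 ->
    0 <= \sum_(e | z e <= z c) f e <= 1.
  move=> f0 f1; rewrite sumr_ge0 //= -f1 (bigID (fun e => z e <= z c) xpredT) /= lerDl.
  by rewrite sumr_ge0.
have [/andP[Sp0 Sp1] /andP[Sq0 Sq1]] := (mass01 p p0 p1, mass01 q q0 q1).
apply: (gap_mass_root_le K1) => //; first by rewrite subr_ge0 ltW.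
  by rewrite normr_ge0 sumrB ler_norml; apply/andP; split; lra.
rewrite tK.
have -> : \sum_(e | z e <= z c) (p e - q e) = - \sum_(e | z c < z e) (p e - q e).
  have : \sum_e (p e - q e) = 0 by rewrite sumrB p1 q1 subrr.
  rewrite (bigID (fun e => z e <= z c)) /= => /eqP; rewrite addr_eq0 => /eqP->.
  by congr (- _); apply: eq_bigl => e; rewrite ltNge.
rewrite normrN; apply: gap_mass_le => //.
- by have := z1 c; have := z1 d; rewrite !ler_norml; lra.
- by rewrite -tK exprn_ge0.
- by move=> e; rewrite addrC subrK.
Qed.

(** * The quantile coupling *)

Section QuantilePlan.
Variable R : realFieldType.

Definition overlap (a b c d : R) : R := Num.max 0 (Num.min b d - Num.max a c).

Lemma overlapC a b c d : overlap a b c d = overlap c d a b.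
Proof. by rewrite /overlap [Num.min b d]minC [Num.max a c]maxC. Qed.

Lemma overlap_ge0 a b c d : 0 <= overlap a b c d.
Proof. by rewrite /overlap le_max lexx. Qed.

Lemma overlap_cat a b e c d : a <= b -> b <= e ->
  overlap a b c d + overlap b e c d = overlap a e c d.
Proof.
move=> ab be; rewrite /overlap.
case: (leP b d) => ?; case: (leP e d) => ?; case: (leP a c) => ?; case: (leP b c) => ?;
  rewrite !maxElt; repeat case: ifPn => ?; lra.
Qed.

Lemma overlap_sub a b c d : c <= a -> a <= b -> b <= d -> overlap a b c d = b - a.
Proof.
by move=> ca ab bd; rewrite /overlap (min_l bd) (max_l ca) max_r // subr_ge0.
Qed.

Lemma overlap0 a c d : overlap a a c d = 0.
Proof.
by rewrite /overlap; case: (leP a d) => ?; case: (leP a c) => ?; apply/max_idPl; lra.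
Qed.

Lemma overlap_cross a b : 0 <= a <= 1 -> 0 <= b <= 1 ->
  overlap 0 a b 1 + overlap a 1 0 b = `|a - b|.
Proof.
move=> /andP[a0 a1] /andP[b0 b1]; rewrite /overlap (min_l a1) (max_r b0) (min_r b1) (max_l a0).
case: (lerP a b) => ab.
- by rewrite (max_l (_ : a - b <= 0)) ?(max_r (_ : 0 <= b - a)); lra.
- by rewrite (max_r (_ : 0 <= a - b)) ?(max_l (_ : b - a <= 0)); lra.
Qed.

Definition cumsum (p : nat -> R) (i : nat) : R := \sum_(j < i) p j.

Lemma cumsum0 (f : nat -> R) : cumsum f 0 = 0.
Proof. exact: big_ord0. Qed.

Lemma cumsumS p i : cumsum p i.+1 = cumsum p i + p i.
Proof. by rewrite /cumsum big_ord_recr. Qed.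

Lemma cumsum_homo p : (forall i, 0 <= p i) -> {homo cumsum p : i j / (i <= j)%nat >-> i <= j}.
Proof.
move=> p0 i j /subnKC <-; elim: (j - i)%nat => [|k IH]; first by rewrite addn0.
by rewrite addnS cumsumS; apply: le_trans IH _; rewrite lerDl.
Qed.

Lemma overlap_sum (A : nat -> R) (m n : nat) c d :
  {homo A : i j / (i <= j)%nat >-> i <= j} -> (m <= n)%nat ->
  \sum_(m <= i < n) overlap (A i) (A i.+1) c d = overlap (A m) (A n) c d.
Proof.
move=> hA; elim: n => [|n IH]; first by rewrite leqn0 => /eqP->; rewrite big_geq // overlap0.
rewrite leq_eqVlt => /predU1P[->|mn]; first by rewrite big_geq // overlap0.
by rewrite big_nat_recr //= IH // overlap_cat // hA.
Qed.

Lemma sum_ord_indicator (n a b : nat) (F : nat -> R) : (b <= n)%nat ->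
  \sum_(i < n) (a <= i < b)%nat%:R * F i = \sum_(a <= i < b) F i.
Proof.
move=> bn; rewrite big_geq_mkord (big_ord_widen_cond n _ _ bn) [RHS]big_mkcond /=.
by apply: eq_bigr => i _; rewrite andbC; case: ifP; rewrite ?mul1r ?mul0r.
Qed.

Lemma dist_eq_sum_gaps (n : nat) (z : nat -> R) :
  (forall i j, (i <= j < n)%nat -> z i <= z j) -> forall i j, (i < n)%nat -> (j < n)%nat ->
  `|z i - z j| = \sum_(l < n) (z l.+1 - z l) * ((l < i) != (l < j))%nat%:R.
Proof.
move=> hz i j; wlog ij : i j / (i <= j)%nat => [hw lt_in lt_jn|lt_in lt_jn].
  case: (leqP i j) => [ij|/ltnW ji]; first exact: hw.
  by rewrite distrC hw //; apply: eq_bigr => l _; rewrite eq_sym.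
have gaps t : (t <= n)%nat -> \sum_(l < n) (z l.+1 - z l) * (0 <= l < t)%nat%:R = z t - z 0.
  move=> tn; under eq_bigr do rewrite mulrC.
  by rewrite (sum_ord_indicator 0 (fun l => z l.+1 - z l) tn) telescope_sumr.
have -> : \sum_(l < n) (z l.+1 - z l) * ((l < i) != (l < j))%nat%:R =
    \sum_(l < n) (z l.+1 - z l) * (0 <= l < j)%nat%:R -
    \sum_(l < n) (z l.+1 - z l) * (0 <= l < i)%nat%:R.
  rewrite -sumrB; apply: eq_bigr => l _; rewrite -mulrBr; congr (_ * _).
  case: (ltnP l i) => li; case: (ltnP l j) => lj /=;
    [exact/esym/subrr | | exact/esym/subr0 | exact/esym/subrr].
  by move: li; rewrite ltnNge (leq_trans ij lj).
rewrite (gaps j (ltnW lt_jn)) (gaps i (ltnW lt_in)) distrC ger0_norm; first by ring.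
by rewrite subr_ge0 hz ?ij.
Qed.

Variables (p q : nat -> R).
Hypotheses (p0 : forall i, 0 <= p i) (q0 : forall i, 0 <= q i).

Definition quantile_plan (i j : nat) : R :=
  overlap (cumsum p i) (cumsum p i.+1) (cumsum q j) (cumsum q j.+1).

Lemma quantile_plan_block (a b c d : nat) : (a <= b)%nat -> (c <= d)%nat ->
  \sum_(a <= i < b) \sum_(c <= j < d) quantile_plan i j =
  overlap (cumsum p a) (cumsum p b) (cumsum q c) (cumsum q d).
Proof.
have Phomo := cumsum_homo p0; have Qhomo := cumsum_homo q0.
move=> ab cd; rewrite -overlap_sum //; apply: eq_bigr => i _.
by rewrite overlapC -overlap_sum //; apply: eq_bigr => j _; rewrite overlapC.
Qed.

Variable n : nat.
Hypotheses (Pn : cumsum p n = 1) (Qn : cumsum q n = 1).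

Lemma quantile_plan_row i : (i < n)%nat -> \sum_(j < n) quantile_plan i j = p i.
Proof.
move=> lt_in; have := quantile_plan_block (leqnSn i) (leq0n n).
rewrite big_nat1 big_mkord => ->; rewrite cumsum0 Qn overlap_sub.
- by rewrite cumsumS addrC addKr.
- by rewrite -(cumsum0 p); apply: cumsum_homo.
- by apply: cumsum_homo.
- by rewrite -Pn; apply: cumsum_homo.
Qed.

Lemma quantile_plan_indicator a b c d : (a <= b <= n)%nat -> (c <= d <= n)%nat ->
  \sum_(i < n) \sum_(j < n) quantile_plan i j * ((a <= i < b)%nat%:R * (c <= j < d)%nat%:R) =
  overlap (cumsum p a) (cumsum p b) (cumsum q c) (cumsum q d).
Proof.
move=> /andP[ab bn] /andP[cd dn].
under eq_bigr do under eq_bigr do rewrite mulrCA [quantile_plan _ _ * _]mulrC.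
under eq_bigr => i _ do rewrite -mulr_sumr (sum_ord_indicator c (quantile_plan i) dn).
rewrite (sum_ord_indicator a (fun i => \sum_(c <= j < d) quantile_plan i j) bn).
exact: quantile_plan_block.
Qed.

(* The mass carried across the [l]-th gap is the difference of the distribution functions. *)
Lemma quantile_plan_cross l : (l < n)%nat ->
  \sum_(i < n) \sum_(j < n) quantile_plan i j * ((l < i) != (l < j))%nat%:R =
  `|cumsum p l.+1 - cumsum q l.+1|.
Proof.
move=> lt_ln.
have cross (i j : 'I_n) : ((l < i) != (l < j))%nat%:R =
    (0 <= i < l.+1)%nat%:R * (l.+1 <= j < n)%nat%:R +
    (l.+1 <= i < n)%nat%:R * (0 <= j < l.+1)%nat%:R :> R.
  by rewrite !ltn_ord !andbT !ltnS /=; case: (ltnP l i); case: (ltnP l j) => /= _ _; ring.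
under eq_bigr do under eq_bigr do rewrite cross mulrDr.
under eq_bigr do rewrite big_split.
rewrite big_split !quantile_plan_indicator ?lt_ln ?leqnn //.
rewrite !cumsum0 Pn Qn; apply: overlap_cross.
- by rewrite -(cumsum0 p) -Pn !cumsum_homo.
- by rewrite -(cumsum0 q) -Qn !cumsum_homo.
Qed.

Lemma quantile_plan_cost (z : nat -> R) : (forall i j, (i <= j < n)%nat -> z i <= z j) ->
  \sum_(i < n) \sum_(j < n) quantile_plan i j * `|z i - z j| =
  \sum_(l < n) (z l.+1 - z l) * `|cumsum p l.+1 - cumsum q l.+1|.
Proof.
move=> hz; under eq_bigr => i _ do under eq_bigr => j _ do
  rewrite (dist_eq_sum_gaps hz (ltn_ord i) (ltn_ord j)) mulr_sumr.
under eq_bigr do rewrite exchange_big; rewrite exchange_big; apply: eq_bigr => l _.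
rewrite -(quantile_plan_cross (ltn_ord l)) mulr_sumr; apply: eq_bigr => i _.
by rewrite mulr_sumr; apply: eq_bigr => j _; rewrite mulrCA.
Qed.

End QuantilePlan.

Lemma quantile_planC (R : realFieldType) (p q : nat -> R) i j :
  quantile_plan p q i j = quantile_plan q p j i.
Proof. exact: overlapC. Qed.

Lemma quantile_plan_col (R : realFieldType) (p q : nat -> R) n j :
  (forall i, 0 <= p i) -> (forall i, 0 <= q i) -> cumsum p n = 1 -> cumsum q n = 1 ->
  (j < n)%nat -> \sum_(i < n) quantile_plan p q i j = q j.
Proof.
move=> p0 q0 Pn Qn lt_jn; under eq_bigr do rewrite quantile_planC.
exact: quantile_plan_row.
Qed.

Section SortedEnumeration.
Variables (R : realFieldType) (K : finType) (z : K -> R).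

Definition sorted_enum : seq K := sort (fun c d => z c <= z d) (enum K).

(* [sorted_val f l] is [0] for [l >= #|K|]. *)
Definition sorted_val (f : K -> R) (l : nat) : R := nth 0 (map f sorted_enum) l.

Local Notation s := sorted_enum.

Lemma perm_sorted_enum : perm_eq s (enum K).
Proof. by rewrite perm_sort. Qed.

Lemma size_sorted_enum : size s = #|K|.
Proof. by rewrite size_sort cardE. Qed.

Lemma mem_sorted_enum c : c \in s.
Proof. by rewrite (perm_mem perm_sorted_enum) mem_enum. Qed.

Lemma index_sorted_enum_lt c : (index c s < #|K|)%nat.
Proof. by rewrite -size_sorted_enum index_mem mem_sorted_enum. Qed.

Lemma sorted_val_index f c : sorted_val f (index c s) = f c.
Proof. by rewrite /sorted_val (nth_map c) ?nth_index ?index_mem ?mem_sorted_enum. Qed.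

Lemma sorted_val_ge0 f : (forall c, 0 <= f c) -> forall l, 0 <= sorted_val f l.
Proof.
move=> f0 l; rewrite /sorted_val; case: (ltnP l (size (map f s))) => [|ls].
  by move=> /(mem_nth 0)/mapP[c _ ->].
by rewrite nth_default.
Qed.

Lemma sorted_val_mem l : (l < #|K|)%nat -> exists c, sorted_val z l = z c.
Proof.
rewrite -size_sorted_enum -(size_map z) => /(mem_nth 0)/mapP[c _ zc].
by exists c.
Qed.

Lemma sum_index_sorted_enum (F : nat -> R) :
  \sum_c F (index c s) = \sum_(l < #|K|) F l.
Proof.
have uniq_s : uniq s by rewrite (perm_uniq perm_sorted_enum) enum_uniq.
rewrite -size_sorted_enum (big_index_uniq 0 +%R (fun l : 'I_(size s) => F l) uniq_s) -big_enum.
rewrite (perm_big _ perm_sorted_enum) /=; apply: eq_big_seq => c cs.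
by case: insubP => [l _ <- //|]; rewrite index_mem mem_sorted_enum.
Qed.

Lemma cumsum_sorted_val_card f : cumsum (sorted_val f) #|K| = \sum_c f c.
Proof.
by rewrite /cumsum -sum_index_sorted_enum; under eq_bigr do rewrite sorted_val_index.
Qed.

Lemma sorted_val_homo i j : (i <= j < #|K|)%nat -> sorted_val z i <= sorted_val z j.
Proof.
move=> /andP[ij jK]; have sorted_zs : sorted <=%R (map z s).
  by rewrite sorted_map; apply: sort_sorted => c d; apply: le_total.
by apply: (sorted_leq_nth le_trans lexx) => //;
  rewrite inE size_map size_sorted_enum ?(leq_ltn_trans ij).
Qed.

Section ConsecutiveGap.
Variable l : nat.
Hypotheses (lK : (l.+1 < #|K|)%nat) (gap : sorted_val z l < sorted_val z l.+1).

Lemma index_sorted_enum_le c : (index c s <= l)%nat = (z c <= sorted_val z l).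
Proof.
rewrite -(sorted_val_index z c); case: (leqP (index c s) l) => cl.
  by rewrite sorted_val_homo // cl (leq_ltn_trans _ lK) // ltnW.
apply/esym/negbTE; rewrite -ltNge; apply: lt_le_trans gap _.
by rewrite sorted_val_homo // cl index_sorted_enum_lt.
Qed.

Lemma sorted_val_gap c : z c <= sorted_val z l \/ sorted_val z l.+1 <= z c.
Proof.
rewrite -(sorted_val_index z c); case: (leqP (index c s) l) => cl; [left | right].
  by rewrite sorted_val_homo // cl (leq_ltn_trans _ lK) // ltnW.
by rewrite sorted_val_homo // cl index_sorted_enum_lt.
Qed.

Lemma cumsum_sorted_val f : cumsum (sorted_val f) l.+1 = \sum_(c | z c <= sorted_val z l) f c.
Proof.
rewrite /cumsum (big_ord_widen #|K| _ (ltnW lK)) big_mkcond.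
rewrite -(sum_index_sorted_enum (fun i => if (i < l.+1)%nat then sorted_val f i else 0)).
rewrite [RHS]big_mkcond; apply: eq_bigr => c _.
by rewrite ltnS index_sorted_enum_le sorted_val_index.
Qed.
End ConsecutiveGap.

Lemma sorted_gap_cdf_le (p q : K -> R) (T : R) l : (l < #|K|)%nat -> 0 <= T ->
  \sum_c p c = \sum_c q c ->
  (forall c d, z c < z d -> (forall e, z e <= z c \/ z d <= z e) ->
     (z d - z c) * `|\sum_(e | z e <= z c) (p e - q e)| <= T) ->
  (sorted_val z l.+1 - sorted_val z l) *
    `|cumsum (sorted_val p) l.+1 - cumsum (sorted_val q) l.+1| <= T.
Proof.
move=> lK T0 pq hgap; case: (ltnP l.+1 #|K|) => lK'; last first.
  have -> : l.+1 = #|K| by apply/eqP; rewrite eqn_leq lK lK'.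
  by rewrite !cumsum_sorted_val_card pq subrr normr0 mulr0.
have := @sorted_val_homo l l.+1; rewrite leqnSn lK' => /(_ isT).
rewrite le_eqVlt => /predU1P[->|gap]; first by rewrite subrr mul0r.
have [[c zc] [d zd]] := (sorted_val_mem lK, sorted_val_mem lK').
rewrite !cumsum_sorted_val // -sumrB.
have sep e : z e <= z c \/ z d <= z e by rewrite -zc -zd; apply: sorted_val_gap.
by rewrite zc zd in gap *; apply: hgap.
Qed.
End SortedEnumeration.

Lemma exists_plan_cost_le (R : realFieldType) (K : finType) (z p q : K -> R) (T : R) :
  0 <= T -> (forall c, 0 <= p c) -> (forall c, 0 <= q c) ->
  \sum_c p c = 1 -> \sum_c q c = 1 ->
  (forall c d, z c < z d -> (forall e, z e <= z c \/ z d <= z e) ->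
     (z d - z c) * `|\sum_(e | z e <= z c) (p e - q e)| <= T) ->
  exists g : K -> K -> R,
    [/\ forall c d, 0 <= g c d, forall c, \sum_d g c d = p c,
        forall d, \sum_c g c d = q d &
        \sum_c \sum_d g c d * `|z c - z d| <= #|K|%:R * T].
Proof.
move=> T0 p0 q0 p1 q1 hgap; pose s := sorted_enum z.
have [P0 Q0] := (sorted_val_ge0 z p0, sorted_val_ge0 z q0).
have [P1 Q1] : cumsum (sorted_val z p) #|K| = 1 /\ cumsum (sorted_val z q) #|K| = 1.
  by rewrite !cumsum_sorted_val_card.
pose G := quantile_plan (sorted_val z p) (sorted_val z q).
exists (fun c d => G (index c s) (index d s)); split.
- by move=> c d; apply: overlap_ge0.
- move=> c; rewrite (sum_index_sorted_enum z (G (index c s))).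
  by rewrite (quantile_plan_row P0 Q0 P1 Q1 (index_sorted_enum_lt z c)) sorted_val_index.
- move=> d; rewrite (sum_index_sorted_enum z (G ^~ (index d s))).
  by rewrite (quantile_plan_col P0 Q0 P1 Q1 (index_sorted_enum_lt z d)) sorted_val_index.
pose zs := sorted_val z z.
under eq_bigr => c _ do under eq_bigr => d _ do
  rewrite -[in z c](sorted_val_index z z c) -(sorted_val_index z z d).
rewrite (sum_index_sorted_enum z (fun i => \sum_d G i (index d s) * `|zs i - zs (index d s)|)).
under eq_bigr => i _ do rewrite (sum_index_sorted_enum z (fun j => G i j * `|zs i - zs j|)).
rewrite (quantile_plan_cost P0 Q0 P1 Q1 (@sorted_val_homo _ _ z)).
apply: (le_trans (y := \sum_(l < #|K|) T)); last by rewrite sumr_const card_ord mulr_natl.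
by apply: ler_sum => l _; apply: sorted_gap_cdf_le; rewrite ?p1 ?q1.
Qed.

(** * Couplings of atomic distributions on [-1, 1] *)

Section SumTypePlans.
Variables (R : realFieldType) (I J : finType) (g : I + J -> I + J -> R).
Hypothesis g0 : forall c d, 0 <= g c d.

Lemma plan_restrict (p : I -> R) (q : J -> R) :
  (forall i, \sum_d g (inl i) d = p i) -> (forall j, \sum_c g c (inr j) = q j) ->
  (forall i, \sum_c g c (inl i) = 0) -> (forall j, \sum_d g (inr j) d = 0) ->
  (forall i j, 0 <= g (inl i) (inr j)) /\
  (forall i, \sum_j g (inl i) (inr j) = p i) /\ (forall j, \sum_i g (inl i) (inr j) = q j).
Proof.
move=> row col col0 row0.
have gl c i : g c (inl i) = 0 by apply: (psumr_eq0P (fun c _ => g0 c (inl i)) (col0 i)).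
have gr j d : g (inr j) d = 0 by apply: (psumr_eq0P (fun d _ => g0 (inr j) d) (row0 j)).
split; [by [] | split] => [i | j].
  rewrite -row big_sumType /= [X in _ = X + _]big1 => [|i' _]; [by rewrite add0r | exact: gl].
rewrite -col big_sumType /= [X in _ = _ + X]big1 => [|j' _]; [by rewrite addr0 | exact: gr].
Qed.

Lemma plan_restrict_cost (z : I + J -> R) :
  \sum_i \sum_j g (inl i) (inr j) * `|z (inl i) - z (inr j)| <=
  \sum_c \sum_d g c d * `|z c - z d|.
Proof.
have cost0 c d : 0 <= g c d * `|z c - z d| by rewrite mulr_ge0.
rewrite big_sumType /= -[leLHS]addr0 lerD ?sumr_ge0 // => [|j _]; last exact: sumr_ge0.
by apply: ler_sum => i _; rewrite big_sumType /= lerDr sumr_ge0.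
Qed.
End SumTypePlans.

Lemma exists_coupling_cost_le (R : realFieldType) (I J : finType)
    (w x : I -> R) (w' x' : J -> R) (delta t : R) :
  (1 < #|I| + #|J|)%nat ->
  (forall i, 0 <= w i) -> \sum_i w i = 1 -> (forall i, `|x i| <= 1) ->
  (forall j, 0 <= w' j) -> \sum_j w' j = 1 -> (forall j, `|x' j| <= 1) ->
  (forall n, (0 < n < #|I| + #|J|)%nat ->
     `|\sum_i w i * x i ^+ n - \sum_j w' j * x' j ^+ n| <= delta) ->
  0 <= t -> t ^+ (#|I| + #|J|).-1 = delta ->
  exists g : I -> J -> R,
    ((forall i j, 0 <= g i j) /\
     (forall i, \sum_j g i j = w i) /\ (forall j, \sum_i g i j = w' j)) /\
    \sum_i \sum_j g i j * `|x i - x' j| <= (#|I| + #|J|)%:R * (36 * t).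
Proof.
move=> IJ w0 w1 x1 w0' w1' x1' hmom t0 tK.
pose z (c : I + J) := match c with inl i => x i | inr j => x' j end.
pose p (c : I + J) := match c with inl i => w i | inr _ => 0 end.
pose q (c : I + J) := match c with inl _ => 0 | inr j => w' j end.
have z1 c : `|z c| <= 1 by case: c.
have p0 c : 0 <= p c by case: c.
have q0 c : 0 <= q c by case: c.
have p1 : \sum_c p c = 1 by rewrite big_sumType /= big1_eq addr0.
have q1 : \sum_c q c = 1 by rewrite big_sumType /= big1_eq add0r.
have moments : moments_le z (fun c => p c - q c) #|{: I + J}| delta.
  move=> n; rewrite card_sum big_sumType /=.
  under eq_bigr do rewrite subr0; under [X in _ + X]eq_bigr do rewrite sub0r mulNr.
  rewrite sumrN; case: n => [_|n n_lt]; last exact: hmom.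
  under eq_bigr do rewrite mulr1; under [X in _ - X]eq_bigr do rewrite mulr1.
  by rewrite w1 w1' subrr normr0 -tK exprn_ge0.
have K1 : (1 < #|{: I + J}|)%nat by rewrite card_sum.
have tK' : t ^+ #|{: I + J}|.-1 = delta by rewrite card_sum.
have [g [g0 grow gcol gcost]] := exists_plan_cost_le (mulr_ge0 (ler0n _ 36) t0)
  p0 q0 p1 q1 (cdf_gap_le K1 z1 p0 q0 p1 q1 t0 tK' moments).
exists (fun i j => g (inl i) (inr j)); split.
  exact: (@plan_restrict _ _ _ g g0 w w' (fun i => grow (inl i)) (fun j => gcol (inr j)))
    (fun i => gcol (inl i)) (fun j => grow (inr j)).
by apply: le_trans (plan_restrict_cost g0 z) _; rewrite -card_sum.
Qed.

Lemma W1_le_coupling_cost (k : nat) (w x w' x' : 'I_k -> R) (g : 'I_k -> 'I_k -> R) :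
  coupling w w' g -> W1 w x w' x' <= coupling_cost x x' g.
Proof.
move=> gw; apply: ge_inf; last by exists g.
exists 0 => _ [g' [[g'0 _] ->]].
by rewrite sumr_ge0 // => i _; rewrite sumr_ge0 // => j _; rewrite mulr_ge0.
Qed.

Theorem proposition1 :
  exists C : R, 0 < C /\
  forall (k : nat) (w x w' x' : 'I_k -> R) (delta : R),
    (0 < k)%nat ->
    katomic_on11 w x -> katomic_on11 w' x' ->
    (forall i : nat, (1 <= i <= 2 * k - 1)%nat ->
       `|moment w x i - moment w' x' i| <= delta) ->
    W1 w x w' x' <= C * k%:R * powR delta (2 * k - 1)%nat%:R^-1.
Proof.
exists 72; split => [|k w x w' x' delta k0 [w0 [w1 x1]] [w0' [w1' x1']] hmom]; first lra.
have delta0 : 0 <= delta by apply: le_trans (hmom 1%nat _); rewrite ?normr_ge0 //; lia.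
set t := powR delta _.
have tK : t ^+ (#|'I_k| + #|'I_k|).-1 = delta.
  rewrite card_ord addnn -mul2n -subn1 /t -powR_mulrn ?powR_ge0 // -powRrM mulVf ?powRr1 //.
  by rewrite pnatr_eq0; lia.
have IJ : (1 < #|'I_k| + #|'I_k|)%nat by rewrite card_ord; lia.
have x1n i : `|x i| <= 1 by rewrite ler_norml x1.
have x1n' j : `|x' j| <= 1 by rewrite ler_norml x1'.
have moments n : (0 < n < #|'I_k| + #|'I_k|)%nat ->
    `|\sum_i w i * x i ^+ n - \sum_j w' j * x' j ^+ n| <= delta.
  by rewrite card_ord => n_lt; apply: hmom; lia.
have [g [coupling_g cost_g]] :=
  exists_coupling_cost_le IJ w0 w1 x1n w0' w1' x1n' moments (powR_ge0 _ _) tK.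
apply: le_trans (W1_le_coupling_cost x x' coupling_g) _; apply: le_trans cost_g _.
rewrite card_ord (_ : (k + k)%nat%:R * (36 * t) = 72 * k%:R * t) //.
by rewrite natrD; ring.
Qed.
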